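(* Assume (A0)–(A3) and let $\{(x^k,\lambda^k)\}$ be generated by the NEPJ-ADMM. Then for every $k\ge1$, $$\hat{\mathcal{L}}_k-\hat{\mathcal{L}}_{k-1}\le\sum_{i=1}^{p-1}\Big(\frac{(p-2+\alpha)\beta\|A_i\|^2}{2}-\frac{m_i}{4}\Big)\|\Delta x_i^k\|^2+\Theta_\lambda^k+\Theta_p^k,$$ where $\Theta_\lambda^k:=\frac{1}{\beta\theta}\|\Delta\lambda^k\|^2+\frac{c_1}{2}\big(\|A_p^*\Delta\lambda^k\|^2-\|A_p^*\Delta\lambda^{k-1}\|^2\big)$ and $\Theta_p^k:=\Big(\frac{(p-1)\beta\|A_p\|^2}{2\alpha}-\frac{m_p}{4}\Big)\big(\|\Delta x_p^k\|^2+\|\Delta x_p^{k-1}\|^2\big)$.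
   Context: Problem: let $p\ge2$, $f_i:\mathbb{R}^{n_i}\to(-\infty,\infty]$ ($i=1,\dots,p$), $A_i\in\mathbb{R}^{d\times n_i}$, $b\in\mathbb{R}^d$, and consider $\min\{\sum_{i=1}^pf_i(x_i):\sum_{i=1}^pA_ix_i=b\}$. For $\beta>0$ the augmented Lagrangian is $\mathcal{L}_\beta(x_1,\dots,x_p,\lambda)=\sum_{i=1}^pf_i(x_i)-\langle\lambda,\sum_{i=1}^pA_ix_i-b\rangle+\frac\beta2\|\sum_{i=1}^pA_ix_i-b\|^2$. Standing assumptions: (A0) $f_1,\dots,f_{p-1}$ are proper lower semicontinuous; (A1) $A_p\ne0$ and $\mathrm{Im}(A_p)\supseteq\{b\}\cup\mathrm{Im}(A_1)\cup\dots\cup\mathrm{Im}(A_{p-1})$; (A2) $f_p:\mathbb{R}^{n_p}\to\mathbb{R}$ is differentiable with $L_p$-Lipschitz gradient; (A3) there is $\bar\beta\ge0$ with $v(\bar\beta)>-\infty$, where $v(\beta):=\inf_{x}\{\sum_{i=1}^pf_i(x_i)+\frac\beta2\|\sum_{i=1}^pA_ix_i-b\|^2\}$. $A^*$ is the transpose; $\sigma^+_{A_p}$ is the smallest positive eigenvalue of $A_p^*A_p$. Distance generating functions: for $Z\subseteq\mathbb{R}^s$ and $0<m\le M$, $\mathcal{D}_Z(m,M)$ is the class of real-valued functions $w$ differentiable on $Z$ with $w(z')-w(z)-\langle\nabla w(z),z'-z\rangle\ge\frac m2\|z'-z\|^2$ and $\|\nabla w(z)-\nabla w(z')\|\le M\|z-z'\|$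 for all $z,z'\in Z$; its Bregman distance is $(dw)_z(z'):=w(z')-w(z)-\langle\nabla w(z),z'-z\rangle$ for $z\in Z$, $z'\in\mathbb{R}^s$. NEPJ-ADMM: let $Z_i=\mathrm{dom} f_i$, $\gamma_\theta:=\theta/(1-|\theta-1|)^2$. Pick $(x_1^0,\dots,x_p^0,\lambda^0)\in Z_1\times\dots\times Z_p\times\mathbb{R}^d$, $\alpha>0$, $\beta\ge\bar\beta$ with $\beta>0$, $M_i\ge m_i>0$, $\theta\in(0,2)$ such that $\delta_i:=\frac{m_i}{4}-\big(\frac{p-2+\alpha}{2}+\frac{2\gamma_\theta(p+1)}{\sigma^+_{A_p}}\|A_p^*\|^2\big)\beta\max_{1\le l\le p-1}\|A_l\|^2>0$ for $i=1,\dots,p-1$ and $\delta_p:=\frac{m_p}{4}-\big(\frac{\beta(p-1)\|A_p\|^2}{2\alpha}+\frac{\gamma_\theta(p+1)(L_p^2+2M_p^2)}{\beta\sigma^+_{A_p}}\big)>0$. For $k\ge1$: for each $i$ choose $w_i^k\in\mathcal{D}_{Z_i}(m_i,M_i)$ and let $x_i^k$ be an optimal solution (assumed to exist) of $\min_{x_i}\{\mathcal{L}_\beta(x^{k-1}_{<i},x_i,x^{k-1}_{>i},\lambda^{k-1})+(dw_i^k)_{x_i^{k-1}}(x_i)\}$, where $(x_{<i},x_i,x_{>i})$ denotes $(x_1,\dots,x_p)$ with the $i$-th block singled out; then set $\lambda^k=\lambda^{k-1}-\theta\beta(\sum_{i=1}^pA_ix_i^k-b)$. Write $x^k=(x_1^k,\dots,x_p^k)$.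 Notation: $\Delta x_i^k:=x_i^k-x_i^{k-1}$, $\Delta\lambda^k:=\lambda^k-\lambda^{k-1}$ for $k\ge1$; $R_p^0:=A_p^*\lambda^0-\nabla f_p(x_p^0)$; conventions $\Delta\lambda^0:=0$, $\Delta x_i^0:=0$ for $i=1,\dots,p-1$, $\Delta x_p^0:=R_p^0/M_p$. Let $c_1:=\frac{2|\theta-1|}{\beta\theta(1-|\theta-1|)\sigma^+_{A_p}}$, $\eta_0:=\frac{m_p}{4M_p^2}\|A_p^*\lambda^0-\nabla f_p(x_p^0)\|^2$, $\eta_k:=\sum_{i=1}^p\frac{m_i}{4}\|\Delta x_i^k\|^2+\frac{c_1}{2}\|A_p^*\Delta\lambda^k\|^2$ for $k\ge1$, and $\hat{\mathcal{L}}_k:=\mathcal{L}_\beta(x^k,\lambda^k)+\eta_k$ for $k\ge0$. *)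

From Stdlib Require Import Reals Lra Lia.
Open Scope R_scope.

(* A vector of R^n is represented by a function nat -> R of which only the
   coordinates 0..n-1 are meaningful; all notions below only read those. *)
Definition vec := nat -> R.
(* A d x n matrix: entry (r, c) with r < d, c < n. *)
Definition mat := nat -> nat -> R.

Fixpoint sumR (n : nat) (f : nat -> R) : R :=
  match n with O => 0 | S m => sumR m f + f m end.

(* sum_{i=1}^{k} g i (block sums, blocks indexed 1..p) *)
Fixpoint sum1 (k : nat) (g : nat -> R) : R :=
  match k with O => 0 | S k' => sum1 k' g + g (S k') end.

(* max_{1<=l<=k} g l (for k >= 1 and g >= 0; base value 0) *)
Fixpoint max1 (k : nat) (g : nat -> R) : R :=
  match k with O => 0 | S k' => Rmax (max1 k' g) (g (S k')) end.

Definition inner (n : nat) (u v : vec) : R := sumR n (fun j => u j * v j).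
Definition norm (n : nat) (u : vec) : R := sqrt (inner n u u).
Definition vadd (u v : vec) : vec := fun j => u j + v j.
Definition vsub (u v : vec) : vec := fun j => u j - v j.
Definition vscal (a : R) (u : vec) : vec := fun j => a * u j.
Definition vzero : vec := fun _ => 0.
Definition veq (n : nat) (u v : vec) : Prop := forall j, (j < n)%nat -> u j = v j.

Definition mapply (n : nat) (A : mat) (x : vec) : vec :=
  fun r => sumR n (fun c => A r c * x c).
Definition transpose (A : mat) : mat := fun c r => A r c.
Definition mtapply (d : nat) (A : mat) (y : vec) : vec := mapply d (transpose A) y.
Definition mtm (d : nat) (A : mat) : mat := fun c c' => sumR d (fun r => A r c * A r c').

Definition is_opnorm (m n : nat) (A : mat) (a : R) : Prop :=
  is_lub (fun r => exists x, norm n x <= 1 /\ r = norm m (mapply n A x)) a.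

Definition is_min_pos_eig (n : nat) (S : mat) (s : R) : Prop :=
  0 < s /\
  (exists v, ~ veq n v vzero /\ veq n (mapply n S v) (vscal s v)) /\
  (forall mu v, 0 < mu -> ~ veq n v vzero -> veq n (mapply n S v) (vscal mu v) -> s <= mu).

Inductive ERbar : Type := Fin (r : R) | PInf.

Definition ERadd (a b : ERbar) : ERbar :=
  match a, b with Fin x, Fin y => Fin (x + y) | _, _ => PInf end.
Definition ERle (a b : ERbar) : Prop :=
  match a, b with
  | Fin x, Fin y => x <= y
  | _, PInf => True
  | PInf, Fin _ => False
  end.
Definition ERlt (a b : ERbar) : Prop :=
  match a, b with
  | Fin x, Fin y => x < y
  | Fin _, PInf => True
  | PInf, _ => False
  end.

Fixpoint ERsum1 (k : nat) (g : nat -> ERbar) : ERbar :=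
  match k with O => Fin 0 | S k' => ERadd (ERsum1 k' g) (g (S k')) end.

(* f : R^n -> (-oo,+oo] is a genuine function of the first n coordinates *)
Definition respects (n : nat) {T : Type} (f : vec -> T) : Prop :=
  forall u v, veq n u v -> f u = f v.

Definition proper_fun (f : vec -> ERbar) : Prop := exists x, f x <> PInf.

Definition lsc (n : nat) (f : vec -> ERbar) : Prop :=
  forall x c, ERlt (Fin c) (f x) ->
    exists delta, 0 < delta /\
      forall y, norm n (vsub y x) < delta -> ERlt (Fin c) (f y).

Definition has_gradient (n : nat) (f : vec -> R) (g : vec) (x : vec) : Prop :=
  forall eps, 0 < eps -> exists delta, 0 < delta /\
    forall h, norm n h < delta ->
      Rabs (f (vadd x h) - f x - inner n g h) <= eps * norm n h.

Definition bregman (n : nat) (w : vec -> R) (gw : vec -> vec) (z z' : vec) : R :=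
  w z' - w z - inner n (gw z) (vsub z' z).

Definition in_D (n : nat) (Z : vec -> Prop) (m M : R) (w : vec -> R) (gw : vec -> vec) : Prop :=
  (forall z, Z z -> has_gradient n w (gw z) z) /\
  (forall z z', Z z -> Z z' -> bregman n w gw z z' >= m / 2 * (norm n (vsub z' z)) ^ 2) /\
  (forall z z', Z z -> Z z' -> norm n (vsub (gw z) (gw z')) <= M * norm n (vsub z z')).

Definition resid (p : nat) (n : nat -> nat) (A : nat -> mat) (b : vec) (x : nat -> vec) : vec :=
  fun r => sum1 p (fun i => mapply (n i) (A i) (x i) r) - b r.

Definition augL (d p : nat) (n : nat -> nat) (f : nat -> vec -> ERbar) (A : nat -> mat)
  (b : vec) (beta : R) (x : nat -> vec) (lam : vec) : ERbar :=
  let r := resid p n A b x in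
  ERadd (ERsum1 p (fun i => f i (x i)))
        (Fin (- inner d lam r + beta / 2 * (norm d r) ^ 2)).

Definition upd (x : nat -> vec) (i : nat) (u : vec) : nat -> vec :=
  fun j => if Nat.eqb j i then u else x j.

From Stdlib Require Import Reals Lra Lia Psatz FunctionalExtensionality.
Open Scope R_scope.

(* Each block x_i^k minimises the augmented Lagrangian plus an m_i-strongly convex Bregman term,
   so comparing it with x_i^{k-1} shows that the block gains m_i/2 ||Δx_i^k||^2 against the change
   of the quadratic coupling term it causes on its own.  Since the blocks move simultaneously, the
   coupling changes do not simply add up: the defect is
   β/2 (||Σ A_iΔx_i||^2 - Σ ||A_iΔx_i||^2), which Cauchy-Schwarz, Young's inequality with weight
   α on the last block and the operator norms bound by the first and last terms of the estimate.
   The multiplier step contributes ||Δλ^k||^2/(βθ).  Finally half of each gain is paid into η_k,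
   and η_{k-1} absorbs the last-block and dual terms it carries from the previous step. *)

Lemma sumR_ext n f g : (forall j, (j < n)%nat -> f j = g j) -> sumR n f = sumR n g.
Proof.
  induction n as [|n IH]; intros Hfg; simpl; [reflexivity|].
  rewrite IH by (intros; apply Hfg; lia). rewrite Hfg by lia. reflexivity.
Qed.

Lemma sumR_add n f g : sumR n (fun j => f j + g j) = sumR n f + sumR n g.
Proof. induction n as [|n IH]; simpl; [ring|]. rewrite IH. ring. Qed.

Lemma sumR_sub n f g : sumR n (fun j => f j - g j) = sumR n f - sumR n g.
Proof. induction n as [|n IH]; simpl; [ring|]. rewrite IH. ring. Qed.

Lemma sumR_scal n a f : sumR n (fun j => a * f j) = a * sumR n f.
Proof. induction n as [|n IH]; simpl; [ring|]. rewrite IH. ring. Qed.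

Lemma sumR_ge0 n f : (forall j, (j < n)%nat -> 0 <= f j) -> 0 <= sumR n f.
Proof.
  induction n as [|n IH]; intros Hf; simpl; [lra|].
  assert (0 <= sumR n f) by (apply IH; intros; apply Hf; lia).
  assert (0 <= f n) by (apply Hf; lia). lra.
Qed.

Lemma sumR_eq0 n f : (forall j, (j < n)%nat -> f j = 0) -> sumR n f = 0.
Proof.
  induction n as [|n IH]; intros Hf; simpl; [reflexivity|].
  rewrite IH, Hf by (intros; try apply Hf; lia). ring.
Qed.

Lemma sum1_ext q g h : (forall j, (1 <= j <= q)%nat -> g j = h j) -> sum1 q g = sum1 q h.
Proof.
  induction q as [|q IH]; intros Hgh; simpl; [reflexivity|].
  rewrite IH by (intros; apply Hgh; lia). rewrite Hgh by lia. reflexivity.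
Qed.

Lemma sum1_add q g h : sum1 q (fun j => g j + h j) = sum1 q g + sum1 q h.
Proof. induction q as [|q IH]; simpl; [ring|]. rewrite IH. ring. Qed.

Lemma sum1_sub q g h : sum1 q (fun j => g j - h j) = sum1 q g - sum1 q h.
Proof. induction q as [|q IH]; simpl; [ring|]. rewrite IH. ring. Qed.

Lemma sum1_scal q a g : sum1 q (fun j => a * g j) = a * sum1 q g.
Proof. induction q as [|q IH]; simpl; [ring|]. rewrite IH. ring. Qed.

Lemma sum1_le q g h : (forall j, (1 <= j <= q)%nat -> g j <= h j) -> sum1 q g <= sum1 q h.
Proof.
  induction q as [|q IH]; intros Hgh; simpl; [lra|].
  assert (sum1 q g <= sum1 q h) by (apply IH; intros; apply Hgh; lia).
  assert (g (S q) <= h (S q)) by (apply Hgh; lia). lra.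
Qed.

Lemma sum1_const0 q : sum1 q (fun _ => 0) = 0.
Proof. induction q as [|q IH]; simpl; [reflexivity|]. rewrite IH. ring. Qed.

Lemma sum1_ge0 q g : (forall j, (1 <= j <= q)%nat -> 0 <= g j) -> 0 <= sum1 q g.
Proof. intros Hg. rewrite <- (sum1_const0 q). apply sum1_le. exact Hg. Qed.

Lemma sum1_le0 q g : (forall j, (1 <= j <= q)%nat -> g j <= 0) -> sum1 q g <= 0.
Proof. intros Hg. rewrite <- (sum1_const0 q). apply sum1_le. exact Hg. Qed.

Lemma sum1_last q g : (1 <= q)%nat -> sum1 q g = sum1 (q - 1) g + g q.
Proof. intros Hq. destruct q as [|q]; [lia|]. simpl. rewrite Nat.sub_0_r. reflexivity. Qed.

Lemma sum1_last_le q g : (1 <= q)%nat -> (forall j, (1 <= j <= q - 1)%nat -> 0 <= g j) ->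
  g q <= sum1 q g.
Proof.
  intros Hq Hg. rewrite sum1_last by exact Hq.
  assert (0 <= sum1 (q - 1) g) by (apply sum1_ge0; exact Hg). lra.
Qed.

Lemma sum1_update q i g g' : (1 <= i <= q)%nat -> (forall j, j <> i -> g' j = g j) ->
  sum1 q g' = sum1 q g - g i + g' i.
Proof.
  induction q as [|q IH]; intros Hi Hg'; [lia|]. simpl.
  destruct (Nat.eq_dec i (S q)) as [->|Hne].
  - rewrite (sum1_ext q g' g) by (intros; apply Hg'; lia). ring.
  - rewrite IH, (Hg' (S q)) by (auto; lia). ring.
Qed.

Lemma inner_sym n u v : inner n u v = inner n v u.
Proof. apply sumR_ext. intros. ring. Qed.

Lemma inner_addr n u v w : inner n u (vadd v w) = inner n u v + inner n u w.
Proof. unfold inner, vadd. rewrite <- sumR_add. apply sumR_ext. intros. ring. Qed.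

Lemma inner_addl n u v w : inner n (vadd u v) w = inner n u w + inner n v w.
Proof. rewrite !(inner_sym n _ w). apply inner_addr. Qed.

Lemma inner_ge0 n u : 0 <= inner n u u.
Proof. apply sumR_ge0. intros. nra. Qed.

Lemma inner_zeror n u v : (forall j, (j < n)%nat -> v j = 0) -> inner n u v = 0.
Proof. intros Hv. apply sumR_eq0. intros j Hj. rewrite Hv by exact Hj. ring. Qed.

Lemma norm_sq n u : norm n u ^ 2 = inner n u u.
Proof. unfold norm. rewrite pow2_sqrt by apply inner_ge0. reflexivity. Qed.

Lemma norm_ge0 n u : 0 <= norm n u.
Proof. apply sqrt_pos. Qed.

Lemma norm_vzero n : norm n vzero = 0.
Proof. unfold norm. rewrite inner_zeror by (intros; reflexivity). apply sqrt_0. Qed.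

Lemma norm_scal n s u : 0 <= s -> norm n (vscal s u) = s * norm n u.
Proof.
  intros Hs. unfold norm.
  replace (inner n (vscal s u) (vscal s u)) with (s ^ 2 * inner n u u).
  - rewrite sqrt_mult_alt, sqrt_pow2 by (auto using pow2_ge_0). reflexivity.
  - unfold inner, vscal. rewrite <- sumR_scal. apply sumR_ext. intros. ring.
Qed.

Lemma inner_young n u v t : 0 < t -> 2 * inner n u v <= t * inner n u u + inner n v v / t.
Proof.
  intros Ht.
  assert (Hsq := inner_ge0 n (fun j => t * u j - v j)).
  unfold inner in *.
  rewrite (sumR_ext n _ (fun j => t * t * (u j * u j) + (-2 * t * (u j * v j) + v j * v j)))
    in Hsq by (intros; ring).
  rewrite !sumR_add, !sumR_scal in Hsq.
  apply Rmult_le_reg_l with t; [exact Ht|].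
  replace (t * (t * sumR n (fun j => u j * u j) + sumR n (fun j => v j * v j) / t))
    with (t * t * sumR n (fun j => u j * u j) + sumR n (fun j => v j * v j)) by (field; lra).
  lra.
Qed.

Definition vsum1 (q : nat) (a : nat -> vec) : vec := fun r => sum1 q (fun i => a i r).

Lemma vsum1_last q a : (1 <= q)%nat -> vsum1 q a = vadd (vsum1 (q - 1) a) (a q).
Proof.
  intros Hq. apply functional_extensionality. intros r.
  unfold vsum1, vadd. exact (sum1_last q (fun i => a i r) Hq).
Qed.

Lemma inner_vsum1r n u q a : inner n u (vsum1 q a) = sum1 q (fun i => inner n u (a i)).
Proof.
  induction q as [|q IH]; simpl.
  - apply inner_zeror. intros; reflexivity.
  - change (vsum1 (S q) a) with (vadd (vsum1 q a) (a (S q))). rewrite inner_addr, IH. reflexivity.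
Qed.

Lemma inner_vsum1_le n q a :
  inner n (vsum1 q a) (vsum1 q a) <= INR q * sum1 q (fun i => inner n (a i) (a i)).
Proof.
  induction q as [|q IH].
  - simpl. rewrite inner_zeror by (intros; reflexivity). lra.
  - change (vsum1 (S q) a) with (vadd (vsum1 q a) (a (S q))).
    set (s := vsum1 q a) in *. set (v := a (S q)).
    rewrite inner_addl, !inner_addr, (inner_sym n v s). simpl sum1. fold v. rewrite S_INR.
    assert (Hv : 0 <= inner n v v) by apply inner_ge0.
    destruct q as [|q].
    + assert (Hs0 : forall w, inner n w s = 0) by (intros; apply inner_zeror; reflexivity).
      rewrite (inner_sym n s v), !Hs0. simpl. lra.
    + assert (Hq : 0 < INR (S q)) by (apply lt_0_INR; lia).
      assert (Hy := inner_young n s v (/ INR (S q)) (Rinv_0_lt_compat _ Hq)).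
      unfold Rdiv in Hy. rewrite Rinv_inv in Hy.
      assert (Hs : / INR (S q) * inner n s s <= sum1 (S q) (fun i => inner n (a i) (a i))).
      { apply Rmult_le_reg_l with (INR (S q)); [exact Hq|].
        rewrite <- Rmult_assoc, Rinv_r by lra. lra. }
      nra.
Qed.

(* Young's inequality with weight alpha / q on the cross term, Cauchy-Schwarz on the first q
   vectors. *)
Lemma jacobi_defect_le n q a v alpha : (1 <= q)%nat -> 0 < alpha ->
  inner n (vadd (vsum1 q a) v) (vadd (vsum1 q a) v)
  - (sum1 q (fun i => inner n (a i) (a i)) + inner n v v)
  <= (INR q - 1 + alpha) * sum1 q (fun i => inner n (a i) (a i)) + INR q / alpha * inner n v v.
Proof.
  intros Hq Halpha.
  set (s := vsum1 q a). set (S2 := sum1 q (fun i => inner n (a i) (a i))).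
  rewrite inner_addl, !inner_addr, (inner_sym n v s).
  assert (Hcs : inner n s s <= INR q * S2) by apply inner_vsum1_le.
  assert (HQ : 1 <= INR q) by (apply (le_INR 1); lia).
  assert (Hy := inner_young n s v (alpha / INR q) ltac:(apply Rdiv_lt_0_compat; lra)).
  replace (inner n v v / (alpha / INR q)) with (INR q / alpha * inner n v v) in Hy by (field; lra).
  assert (alpha / INR q * inner n s s <= alpha * S2).
  { unfold Rdiv. rewrite Rmult_assoc. apply Rmult_le_compat_l; [lra|].
    apply Rmult_le_reg_l with (INR q); [lra|]. rewrite <- Rmult_assoc, Rinv_r by lra. lra. }
  lra.
Qed.

Lemma jacobi_defect_bound n p a (B : nat -> R) alpha : (2 <= p)%nat -> 0 < alpha ->
  (forall i, (1 <= i <= p)%nat -> inner n (a i) (a i) <= B i) ->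
  inner n (vsum1 p a) (vsum1 p a) - sum1 p (fun i => inner n (a i) (a i))
  <= (INR p - 2 + alpha) * sum1 (p - 1) B + (INR p - 1) / alpha * B p.
Proof.
  intros Hp Halpha HB.
  rewrite (vsum1_last p a), (sum1_last p (fun i => inner n (a i) (a i))) by lia.
  assert (Hdef := jacobi_defect_le n (p - 1) a (a p) alpha ltac:(lia) Halpha).
  rewrite minus_INR in Hdef by lia.
  assert (HP : 2 <= INR p) by (apply (le_INR 2); exact Hp).
  assert (Hsum : sum1 (p - 1) (fun i => inner n (a i) (a i)) <= sum1 (p - 1) B)
    by (apply sum1_le; intros; apply HB; lia).
  assert ((INR p - 1 - 1 + alpha) * sum1 (p - 1) (fun i => inner n (a i) (a i))
          <= (INR p - 1 - 1 + alpha) * sum1 (p - 1) B) by (apply Rmult_le_compat_l; lra).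
  assert ((INR p - 1) / alpha * inner n (a p) (a p) <= (INR p - 1) / alpha * B p).
  { apply Rmult_le_compat_l; [|apply HB; lia].
    unfold Rdiv. apply Rmult_le_pos; [lra | left; apply Rinv_0_lt_compat, Halpha]. }
  simpl INR in Hdef. lra.
Qed.

Lemma mapply_sub n A u v : mapply n A (vsub u v) = vsub (mapply n A u) (mapply n A v).
Proof.
  apply functional_extensionality. intros r. unfold mapply, vsub.
  rewrite <- sumR_sub. apply sumR_ext. intros. ring.
Qed.

Lemma mapply_scal n A s u : mapply n A (vscal s u) = vscal s (mapply n A u).
Proof.
  apply functional_extensionality. intros r. unfold mapply, vscal.
  rewrite <- sumR_scal. apply sumR_ext. intros. ring.
Qed.

Lemma mapply_vzero n A : mapply n A vzero = vzero.
Proof.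
  apply functional_extensionality. intros r. unfold mapply.
  apply sumR_eq0. intros. unfold vzero. ring.
Qed.

Lemma opnorm_ge0 m n A a : is_opnorm m n A a -> 0 <= a.
Proof.
  intros [Hub _]. apply Hub. exists vzero.
  rewrite mapply_vzero, !norm_vzero. split; [lra | reflexivity].
Qed.

Lemma opnorm_le m n A a y : is_opnorm m n A a -> norm m (mapply n A y) <= a * norm n y.
Proof.
  intros Hop. assert (Ha := opnorm_ge0 _ _ _ _ Hop). destruct Hop as [Hub _].
  apply Rle_plus_epsilon. intros eps Heps.
  set (t := norm n y + eps / (a + 1)).
  assert (Ht : 0 < t).
  { assert (0 <= norm n y) by apply norm_ge0.
    assert (0 < eps / (a + 1)) by (apply Rdiv_lt_0_compat; lra). unfold t. lra. }
  assert (Hunit : / t * norm m (mapply n A y) <= a).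
  { apply Hub. exists (vscal (/ t) y).
    rewrite mapply_scal, !norm_scal by (left; apply Rinv_0_lt_compat, Ht).
    split; [|reflexivity].
    apply Rmult_le_reg_l with t; [exact Ht|]. rewrite <- Rmult_assoc, Rinv_r by lra.
    assert (0 < eps / (a + 1)) by (apply Rdiv_lt_0_compat; lra). unfold t. lra. }
  assert (Hle : norm m (mapply n A y) <= a * t).
  { apply Rmult_le_reg_l with (/ t); [apply Rinv_0_lt_compat, Ht|].
    rewrite (Rmult_comm a), <- Rmult_assoc, Rinv_l by lra. lra. }
  assert (a * (eps / (a + 1)) <= eps).
  { apply Rmult_le_reg_l with (a + 1); [lra|].
    replace ((a + 1) * (a * (eps / (a + 1)))) with (a * eps) by (field; lra). nra. }
  unfold t in Hle. lra.
Qed.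

Lemma opnorm_sq_le m n A a y : is_opnorm m n A a ->
  inner m (mapply n A y) (mapply n A y) <= a ^ 2 * inner n y y.
Proof.
  intros Hop. rewrite <- !norm_sq.
  assert (Hle := opnorm_le _ _ _ _ y Hop).
  assert (0 <= norm m (mapply n A y)) by apply norm_ge0.
  replace (a ^ 2 * norm n y ^ 2) with ((a * norm n y) ^ 2) by ring.
  apply pow_incr. lra.
Qed.

(* Only ever applied to finite values; the 0 at PInf is a junk value. *)
Definition fin (e : ERbar) : R := match e with Fin r => r | PInf => 0 end.

Definition finite_on (p : nat) (f : nat -> vec -> ERbar) (X : nat -> vec) : Prop :=
  forall j, (1 <= j <= p)%nat -> f j (X j) <> PInf.

Lemma ERsum1_fin q g : (forall j, (1 <= j <= q)%nat -> g j <> PInf) ->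
  ERsum1 q g = Fin (sum1 q (fun j => fin (g j))).
Proof.
  induction q as [|q IH]; intros Hg; simpl; [reflexivity|].
  rewrite IH by (intros; apply Hg; lia).
  assert (g (S q) <> PInf) by (apply Hg; lia).
  destruct (g (S q)); [reflexivity | congruence].
Qed.

Lemma ERsum1_finite q g : ERsum1 q g <> PInf -> forall j, (1 <= j <= q)%nat -> g j <> PInf.
Proof.
  induction q as [|q IH]; simpl; intros Hsum j Hj; [lia|].
  destruct (ERsum1 q g) eqn:Eq; [|contradiction].
  destruct (Nat.eq_dec j (S q)) as [->|Hne].
  - intros Eg. rewrite Eg in Hsum. contradiction.
  - apply IH; [discriminate | lia].
Qed.

(* [augL] is the objective plus this term evaluated at the residual. *)
Definition coupling (d : nat) (beta : R) (lam r : vec) : R :=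
  - inner d lam r + beta / 2 * inner d r r.

Lemma augL_fin d p n f A b beta X lam : finite_on p f X ->
  augL d p n f A b beta X lam =
  Fin (sum1 p (fun j => fin (f j (X j))) + coupling d beta lam (resid p n A b X)).
Proof.
  intros HX. unfold augL. rewrite ERsum1_fin by exact HX.
  unfold coupling. rewrite norm_sq. reflexivity.
Qed.

Lemma augL_finite d p n f A b beta X lam :
  augL d p n f A b beta X lam <> PInf -> finite_on p f X.
Proof.
  unfold augL. intros HL j. apply (ERsum1_finite p (fun j => f j (X j))).
  intros Hs. apply HL. rewrite Hs. reflexivity.
Qed.

Lemma upd_same X i : upd X i (X i) = X.
Proof.
  apply functional_extensionality. intros j. unfold upd.
  destruct (Nat.eqb_spec j i) as [->|]; reflexivity.
Qed.

Lemma upd_at X i u : upd X i u i = u.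
Proof. unfold upd. rewrite Nat.eqb_refl. reflexivity. Qed.

Lemma finite_on_upd p f X i u : finite_on p f X -> f i u <> PInf -> finite_on p f (upd X i u).
Proof. intros HX Hu j Hj. unfold upd. destruct (Nat.eqb_spec j i) as [->|]; auto. Qed.

Lemma resid_upd p n A b X i u : (1 <= i <= p)%nat ->
  resid p n A b (upd X i u) = vadd (resid p n A b X) (mapply (n i) (A i) (vsub u (X i))).
Proof.
  intros Hi. apply functional_extensionality. intros r.
  unfold resid, vadd. rewrite mapply_sub. unfold vsub.
  rewrite (sum1_update p i (fun j => mapply (n j) (A j) (X j) r)
             (fun j => mapply (n j) (A j) (upd X i u j) r)).
  2: exact Hi.
  2: intros j Hj; unfold upd; destruct (Nat.eqb_spec j i); [contradiction | reflexivity].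
  rewrite upd_at. ring.
Qed.

Lemma resid_vsum1 p n A b X Y :
  resid p n A b Y =
  vadd (resid p n A b X) (vsum1 p (fun i => mapply (n i) (A i) (vsub (Y i) (X i)))).
Proof.
  apply functional_extensionality. intros r. unfold resid, vadd, vsum1.
  rewrite (sum1_ext p (fun i => mapply (n i) (A i) (vsub (Y i) (X i)) r)
             (fun i => mapply (n i) (A i) (Y i) r - mapply (n i) (A i) (X i) r))
    by (intros; rewrite mapply_sub; reflexivity).
  rewrite sum1_sub. ring.
Qed.

Lemma coupling_add d beta lam r v :
  coupling d beta lam (vadd r v) - coupling d beta lam r =
  - inner d lam v + beta * inner d r v + beta / 2 * inner d v v.
Proof. unfold coupling. rewrite !inner_addr, !inner_addl, (inner_sym d v r). field. Qed.

Lemma coupling_jacobi d beta lam r q a :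
  coupling d beta lam (vadd r (vsum1 q a)) - coupling d beta lam r
  - sum1 q (fun i => coupling d beta lam (vadd r (a i)) - coupling d beta lam r)
  = beta / 2 * (inner d (vsum1 q a) (vsum1 q a) - sum1 q (fun i => inner d (a i) (a i))).
Proof.
  rewrite coupling_add, !inner_vsum1r.
  rewrite (sum1_ext q (fun i => coupling d beta lam (vadd r (a i)) - coupling d beta lam r)
                      (fun i => beta * inner d r (a i) - inner d lam (a i)
                                + beta / 2 * inner d (a i) (a i)))
    by (intros; rewrite coupling_add; ring).
  rewrite sum1_add, sum1_sub, !sum1_scal. ring.
Qed.

Lemma coupling_dual_step d beta theta lam0 lam1 r : beta * theta <> 0 ->
  veq d lam1 (fun j => lam0 j - theta * beta * r j) ->
  coupling d beta lam1 r - coupling d beta lam0 r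
  = 1 / (beta * theta) * norm d (vsub lam1 lam0) ^ 2.
Proof.
  intros Hbt Hlam. rewrite norm_sq. unfold coupling, inner, vsub.
  rewrite (sumR_ext d (fun j => lam1 j * r j) (fun j => lam0 j * r j - theta * beta * (r j * r j)))
    by (intros; rewrite Hlam by assumption; ring).
  rewrite (sumR_ext d (fun j => (lam1 j - lam0 j) * (lam1 j - lam0 j))
                      (fun j => (theta * beta) ^ 2 * (r j * r j)))
    by (intros; rewrite Hlam by assumption; ring).
  rewrite sumR_sub, !sumR_scal. field.
  split; intros E; apply Hbt; rewrite E; ring.
Qed.

Lemma bregman_diag n w gw z : bregman n w gw z z = 0.
Proof. unfold bregman. rewrite inner_zeror by (intros; unfold vsub; ring). ring. Qed.

Section JacobiStep.

Variables (d p : nat) (n : nat -> nat) (f : nat -> vec -> ERbar) (A : nat -> mat) (b : vec)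
  (beta : R).

Lemma block_update_finite i X y lam By Bx : (1 <= i <= p)%nat -> finite_on p f X ->
  ERle (ERadd (augL d p n f A b beta (upd X i y) lam) (Fin By))
       (ERadd (augL d p n f A b beta (upd X i (X i)) lam) (Fin Bx)) ->
  f i y <> PInf.
Proof.
  intros Hi HX Hopt.
  rewrite upd_same, (augL_fin _ _ _ _ _ _ _ X) in Hopt by exact HX.
  assert (HL : augL d p n f A b beta (upd X i y) lam <> PInf).
  { intros E. rewrite E in Hopt. exact Hopt. }
  rewrite <- (upd_at X i y). exact (augL_finite _ _ _ _ _ _ _ _ _ HL i Hi).
Qed.

Lemma iterates_finite (x : nat -> nat -> vec) lam (B : nat -> nat -> vec -> R) :
  finite_on p f (x 0%nat) ->
  (forall k i, (1 <= k)%nat -> (1 <= i <= p)%nat ->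
     ERle (ERadd (augL d p n f A b beta (upd (x (k - 1)%nat) i (x k i)) (lam (k - 1)%nat))
                 (Fin (B k i (x k i))))
          (ERadd (augL d p n f A b beta (upd (x (k - 1)%nat) i (x (k - 1)%nat i)) (lam (k - 1)%nat))
                 (Fin (B k i (x (k - 1)%nat i))))) ->
  forall k, finite_on p f (x k).
Proof.
  intros H0 Hopt k. induction k as [|k IH]; [exact H0|]. intros i Hi.
  assert (Hk := Hopt (S k) i ltac:(lia) Hi). rewrite Nat.sub_succ, Nat.sub_0_r in Hk.
  exact (block_update_finite i (x k) _ _ _ _ Hi IH Hk).
Qed.

Lemma block_update_descent i X y lam mi Mi w gw : (1 <= i <= p)%nat ->
  finite_on p f X -> f i y <> PInf ->
  in_D (n i) (fun z => f i z <> PInf) mi Mi w gw ->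
  ERle (ERadd (augL d p n f A b beta (upd X i y) lam) (Fin (bregman (n i) w gw (X i) y)))
       (ERadd (augL d p n f A b beta (upd X i (X i)) lam)
              (Fin (bregman (n i) w gw (X i) (X i)))) ->
  fin (f i y) - fin (f i (X i))
  + (coupling d beta lam (vadd (resid p n A b X) (mapply (n i) (A i) (vsub y (X i))))
     - coupling d beta lam (resid p n A b X))
  + mi / 2 * norm (n i) (vsub y (X i)) ^ 2 <= 0.
Proof.
  intros Hi HX Hy [_ [Hstrong _]] Hopt.
  assert (HXy : finite_on p f (upd X i y)) by (apply finite_on_upd; assumption).
  rewrite upd_same, bregman_diag, (augL_fin _ _ _ _ _ _ _ X) in Hopt by exact HX.
  rewrite augL_fin, resid_upd in Hopt by assumption.
  simpl in Hopt.
  rewrite (sum1_update p i (fun j => fin (f j (X j)))) in Hopt.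
  2: exact Hi.
  2: intros j Hj; unfold upd; destruct (Nat.eqb_spec j i); [contradiction | reflexivity].
  rewrite upd_at in Hopt.
  specialize (Hstrong (X i) y (HX i Hi) Hy).
  lra.
Qed.

Lemma jacobi_step_descent X Y lam0 lam1 (m nA : nat -> R) alpha theta :
  (2 <= p)%nat -> 0 < alpha -> 0 < beta -> theta <> 0 ->
  (forall i, (1 <= i <= p)%nat -> is_opnorm d (n i) (A i) (nA i)) ->
  (forall i, (1 <= i <= p)%nat ->
     fin (f i (Y i)) - fin (f i (X i))
     + (coupling d beta lam0 (vadd (resid p n A b X) (mapply (n i) (A i) (vsub (Y i) (X i))))
        - coupling d beta lam0 (resid p n A b X))
     + m i / 2 * norm (n i) (vsub (Y i) (X i)) ^ 2 <= 0) ->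
  veq d lam1 (fun r => lam0 r - theta * beta * resid p n A b Y r) ->
  sum1 p (fun j => fin (f j (Y j))) + coupling d beta lam1 (resid p n A b Y)
  - (sum1 p (fun j => fin (f j (X j))) + coupling d beta lam0 (resid p n A b X))
  <= sum1 (p - 1) (fun i => ((INR p - 2 + alpha) * beta * nA i ^ 2 / 2 - m i / 2)
                           * norm (n i) (vsub (Y i) (X i)) ^ 2)
     + ((INR p - 1) * beta * nA p ^ 2 / (2 * alpha) - m p / 2)
       * norm (n p) (vsub (Y p) (X p)) ^ 2
     + 1 / (beta * theta) * norm d (vsub lam1 lam0) ^ 2.
Proof.
  intros Hp Halpha Hbeta Htheta HnA Hblock Hlam.
  set (r0 := resid p n A b X) in *.
  set (a := fun i => mapply (n i) (A i) (vsub (Y i) (X i))).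
  assert (Hsum := sum1_le0 p (fun i => fin (f i (Y i)) - fin (f i (X i))
                    + (coupling d beta lam0 (vadd r0 (a i)) - coupling d beta lam0 r0)
                    + m i / 2 * norm (n i) (vsub (Y i) (X i)) ^ 2) Hblock).
  rewrite !sum1_add, sum1_sub, (sum1_last p (fun i => m i / 2 * _)) in Hsum by lia.
  assert (Hjac := coupling_jacobi d beta lam0 r0 p a).
  assert (Hres : vadd r0 (vsum1 p a) = resid p n A b Y) by (symmetry; apply resid_vsum1).
  rewrite Hres in Hjac.
  assert (Hop : forall i, (1 <= i <= p)%nat ->
            inner d (a i) (a i) <= nA i ^ 2 * norm (n i) (vsub (Y i) (X i)) ^ 2).
  { intros i Hi. rewrite norm_sq. apply opnorm_sq_le, HnA, Hi. }
  assert (Hdef := jacobi_defect_bound d p a _ alpha Hp Halpha Hop).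
  assert (Hdefb := Rmult_le_compat_l (beta / 2) _ _ ltac:(lra) Hdef).
  assert (Hdual := coupling_dual_step d beta theta lam0 lam1 (resid p n A b Y)
                     ltac:(apply Rmult_integral_contrapositive; lra) Hlam).
  rewrite (sum1_ext (p - 1) _
             (fun i => (INR p - 2 + alpha) * beta / 2
                         * (nA i ^ 2 * norm (n i) (vsub (Y i) (X i)) ^ 2)
                       - m i / 2 * norm (n i) (vsub (Y i) (X i)) ^ 2))
    by (intros; field).
  rewrite sum1_sub, sum1_scal.
  replace ((INR p - 1) * beta * nA p ^ 2 / (2 * alpha))
    with (beta / 2 * ((INR p - 1) / alpha * nA p ^ 2)) by (field; lra).
  lra.
Qed.

End JacobiStep.

(* Half of the strong-convexity gain m_i/2 ||Δx_i||^2 is paid into the Lyapunov term, which in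
   turn absorbs the dual and last-block terms of the previous step. *)
Lemma absorb_half_descent q (c m D : nat -> R) cq Dq' c1 L1 L0 E1 E0 T e1 e0 :
  L1 - L0 <= sum1 (q - 1) (fun i => (c i - m i / 2) * D i) + (cq - m q / 2) * D q + T ->
  E1 = sum1 q (fun i => m i / 4 * D i) + c1 / 2 * e1 ->
  E0 >= m q / 4 * Dq' + c1 / 2 * e0 ->
  (1 <= q)%nat -> 0 <= cq -> 0 <= Dq' ->
  L1 + E1 - (L0 + E0)
  <= sum1 (q - 1) (fun i => (c i - m i / 4) * D i) + (T + c1 / 2 * (e1 - e0))
     + (cq - m q / 4) * (D q + Dq').
Proof.
  intros HL HE1 HE0 Hq Hcq HDq'.
  rewrite HE1, sum1_last by exact Hq.
  rewrite (sum1_ext (q - 1) (fun i => (c i - m i / 4) * D i)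
                    (fun i => (c i - m i / 2) * D i + m i / 4 * D i)) by (intros; field).
  rewrite sum1_add.
  assert (0 <= cq * Dq') by (apply Rmult_le_pos; assumption).
  lra.
Qed.

Theorem mainTheorem5
  (p d : nat) (n : nat -> nat)
  (f : nat -> vec -> ERbar) (fp : vec -> R) (gfp : vec -> vec) (Lp : R)
  (A : nat -> mat) (b : vec)
  (nA : nat -> R) (nApt : R) (sig : R)
  (betabar alpha beta theta : R) (m M : nat -> R)
  (w : nat -> nat -> vec -> R) (gw : nat -> nat -> vec -> vec)
  (x : nat -> nat -> vec) (lam : nat -> vec) :
  let P := INR p in
  let gam := theta / (1 - Rabs (theta - 1)) ^ 2 in
  let c1 := 2 * Rabs (theta - 1) / (beta * theta * (1 - Rabs (theta - 1)) * sig) in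
  let Rp0 := vsub (mtapply d (A p) (lam 0%nat)) (gfp (x 0%nat p)) in
  let dx := fun (k i : nat) =>
    match k with
    | O => if Nat.eqb i p then vscal (1 / M p) Rp0 else vzero
    | S k' => vsub (x k i) (x k' i)
    end in
  let dlam := fun k : nat =>
    match k with O => vzero | S k' => vsub (lam k) (lam k') end in
  let eta := fun k : nat =>
    match k with
    | O => m p / (4 * (M p) ^ 2) * (norm (n p) Rp0) ^ 2
    | S _ => sum1 p (fun i => m i / 4 * (norm (n i) (dx k i)) ^ 2)
             + c1 / 2 * (norm (n p) (mtapply d (A p) (dlam k))) ^ 2
    end in
  let Lhat := fun k : nat =>
    ERadd (augL d p n f A b beta (x k) (lam k)) (Fin (eta k)) in
  let Theta_lam := fun k : nat =>
    1 / (beta * theta) * (norm d (dlam k)) ^ 2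
    + c1 / 2 * ((norm (n p) (mtapply d (A p) (dlam k))) ^ 2
                - (norm (n p) (mtapply d (A p) (dlam (k - 1)%nat))) ^ 2) in
  let Theta_p := fun k : nat =>
    ((P - 1) * beta * (nA p) ^ 2 / (2 * alpha) - m p / 4)
    * ((norm (n p) (dx k p)) ^ 2 + (norm (n p) (dx (k - 1)%nat p)) ^ 2) in
  (2 <= p)%nat ->
  (* each f_i is a function on R^{n_i} *)
  (forall i, (1 <= i <= p)%nat -> respects (n i) (f i)) ->
  (* (A0) *)
  (forall i, (1 <= i <= p - 1)%nat -> proper_fun (f i) /\ lsc (n i) (f i)) ->
  (* (A1) *)
  (exists r c, (r < d)%nat /\ (c < n p)%nat /\ A p r c <> 0) ->
  (exists z, veq d (mapply (n p) (A p) z) b) ->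
  (forall i, (1 <= i <= p - 1)%nat -> forall y,
      exists z, veq d (mapply (n p) (A p) z) (mapply (n i) (A i) y)) ->
  (* (A2) *)
  (forall z, f p z = Fin (fp z)) ->
  (forall z, has_gradient (n p) fp (gfp z) z) ->
  (forall z z', norm (n p) (vsub (gfp z) (gfp z')) <= Lp * norm (n p) (vsub z z')) ->
  (* (A3) *)
  0 <= betabar ->
  (exists c, forall xx : nat -> vec,
      ERle (Fin c) (ERadd (ERsum1 p (fun i => f i (xx i)))
                          (Fin (betabar / 2 * (norm d (resid p n A b xx)) ^ 2)))) ->
  (forall i, (1 <= i <= p)%nat -> is_opnorm d (n i) (A i) (nA i)) ->
  is_opnorm (n p) d (transpose (A p)) nApt ->
  is_min_pos_eig (n p) (mtm d (A p)) sig ->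
  (forall i, (1 <= i <= p)%nat -> f i (x 0%nat i) <> PInf) ->
  0 < alpha -> betabar <= beta -> 0 < beta ->
  (forall i, (1 <= i <= p)%nat -> 0 < m i <= M i) ->
  0 < theta < 2 ->
  (forall i, (1 <= i <= p - 1)%nat ->
     m i / 4 - ((P - 2 + alpha) / 2 + 2 * gam * (P + 1) / sig * nApt ^ 2)
               * beta * max1 (p - 1) (fun l => (nA l) ^ 2) > 0) ->
  m p / 4 - (beta * (P - 1) * (nA p) ^ 2 / (2 * alpha)
             + gam * (P + 1) * (Lp ^ 2 + 2 * (M p) ^ 2) / (beta * sig)) > 0 ->
  (* the NEPJ-ADMM iterations *)
  (forall k i, (1 <= k)%nat -> (1 <= i <= p)%nat ->
     respects (n i) (w k i) /\
     in_D (n i) (fun z => f i z <> PInf) (m i) (M i) (w k i) (gw k i) /\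
     (forall u,
        ERle (ERadd (augL d p n f A b beta (upd (x (k - 1)%nat) i (x k i)) (lam (k - 1)%nat))
                    (Fin (bregman (n i) (w k i) (gw k i) (x (k - 1)%nat i) (x k i))))
             (ERadd (augL d p n f A b beta (upd (x (k - 1)%nat) i u) (lam (k - 1)%nat))
                    (Fin (bregman (n i) (w k i) (gw k i) (x (k - 1)%nat i) u))))) ->
  (forall k, (1 <= k)%nat ->
     veq d (lam k) (fun r => lam (k - 1)%nat r
                             - theta * beta * resid p n A b (x k) r)) ->
  forall k, (1 <= k)%nat ->
    exists a a', Lhat k = Fin a /\ Lhat (k - 1)%nat = Fin a' /\
      a - a' <= sum1 (p - 1) (fun i =>
                   ((P - 2 + alpha) * beta * (nA i) ^ 2 / 2 - m i / 4)
                   * (norm (n i) (dx k i)) ^ 2)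
                + Theta_lam k + Theta_p k.
Proof.
  (* The one-step estimate uses none of (A0)-(A3), sigma^+_{A_p}, ||A_p^*|| or delta_i > 0. *)
  intros P gam c1 Rp0 dx dlam eta Lhat Theta_lam Theta_p Hp _ _ _ _ _ _ _ _ _ _ HnA _ _ Hfin0
    Halpha _ Hbeta Hm Htheta _ _ Hiter Hlam k Hk.
  assert (Hfin := iterates_finite d p n f A b beta x lam
    (fun k i => bregman (n i) (w k i) (gw k i) (x (k - 1)%nat i)) Hfin0
    (fun k i Hk Hi => proj2 (proj2 (Hiter k i Hk Hi)) (x (k - 1)%nat i))).
  destruct k as [|k]; [lia|].
  assert (Hk1 : (S k - 1)%nat = k) by lia.
  assert (Hblock := fun i => Hiter (S k) i ltac:(lia)).
  assert (Hdual := Hlam (S k) ltac:(lia)).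
  rewrite Hk1 in Hblock, Hdual.
  assert (Hstep := jacobi_step_descent d p n f A b beta (x k) (x (S k)) (lam k) (lam (S k))
    m nA alpha theta Hp Halpha Hbeta ltac:(lra) HnA
    (fun i Hi => block_update_descent d p n f A b beta i (x k) (x (S k) i) (lam k) (m i) (M i)
       _ _ Hi (Hfin k) (Hfin (S k) i Hi)
       (proj1 (proj2 (Hblock i Hi))) (proj2 (proj2 (Hblock i Hi)) (x k i)))
    Hdual).
  assert (Heta : eta k >= m p / 4 * norm (n p) (dx k p) ^ 2
                          + c1 / 2 * norm (n p) (mtapply d (A p) (dlam k)) ^ 2).
  { destruct k as [|k].
    - (* by the convention Δx_p^0 = R_p^0 / M_p, η_0 is exactly m_p/4 ||Δx_p^0||^2 *)
      destruct (Hm p ltac:(lia)) as [Hmp HMp].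
      cbv delta [eta dx dlam] beta iota. rewrite Nat.eqb_refl.
      unfold mtapply. rewrite mapply_vzero, norm_vzero, norm_scal
        by (left; apply Rdiv_lt_0_compat; lra).
      right. field. lra.
    - cbv delta [eta] beta iota. apply Rle_ge, Rplus_le_compat_r.
      apply (sum1_last_le p (fun i => m i / 4 * norm (n i) (dx (S k) i) ^ 2)); [lia|].
      intros i Hi. destruct (Hm i ltac:(lia)).
      apply Rmult_le_pos; [lra | apply pow2_ge_0]. }
  exists (sum1 p (fun j => fin (f j (x (S k) j)))
          + coupling d beta (lam (S k)) (resid p n A b (x (S k))) + eta (S k)),
         (sum1 p (fun j => fin (f j (x k j)))
          + coupling d beta (lam k) (resid p n A b (x k)) + eta k).
  unfold Lhat, Theta_lam, Theta_p. rewrite Hk1, !augL_fin by apply Hfin.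
  split; [reflexivity | split; [reflexivity|]].
  assert (2 <= P) by (apply (le_INR 2); exact Hp).
  eapply (absorb_half_descent p _ m);
    [exact Hstep | reflexivity | exact Heta | lia | | apply pow2_ge_0].
  repeat first [apply pow2_ge_0 | apply Rmult_le_pos]; try lra.
  left. apply Rinv_0_lt_compat. lra.
Qed.
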